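(* Let $\mathcal{R}$ be a finite valuation ring of order $q^r$, where $q$ is a power of an odd prime. For every constant $c>0$ there is a constant $C>0$ depending only on $c$ such that: for every $\mathcal{A}\subset\mathcal{R}$ with $|\mathcal{A}|\ge 2q^{r-1}$ and $|\mathcal{A}+\mathcal{A}|\,|\mathcal{A}|^2\ge c\,q^{3r-1}$, \[\max\{|\mathcal{A}+\mathcal{A}|,\ |\mathcal{A}^2+\mathcal{A}^2|\}\ \ge\ C\,q^{r/3}|\mathcal{A}|^{2/3}.\]
   Context: A finite valuation ring is a finite, local, principal commutative ring with identity. Its unique maximal ideal is $(z)$ for a uniformizer $z$; the residue field $\mathcal{R}/(z)$ has $q$ elements; $r$ is the smallest positive integer with $z^r=0$; then $|\mathcal{R}|=q^r$ and $|(z)|=q^{r-1}$. For $\mathcal{A}\subset\mathcal{R}$: $\mathcal{A}+\mathcal{A}=\{a+b: a,b\in\mathcal{A}\}$, $\mathcal{A}^2=\{x^2: x\in\mathcal{A}\}$, and $\mathcal{A}^2+\mathcal{A}^2=\{u+v: u,v\in\mathcal{A}^2\}$. *)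

From mathcomp Require Import all_boot all_order all_algebra.
Set Implicit Arguments. Unset Strict Implicit. Unset Printing Implicit Defensive.
Import GRing.Theory.
Local Open Scope ring_scope.

Section FVR.
Variable R : finComNzRingType.

Definition is_ideal (I : {set R}) : Prop :=
  [/\ 0 \in I,
      forall x y, x \in I -> y \in I -> x + y \in I &
      forall r x, x \in I -> r * x \in I].

Definition proper_ideal (I : {set R}) : Prop := is_ideal I /\ 1 \notin I.

Definition maximal_ideal (I : {set R}) : Prop :=
  proper_ideal I /\ forall J, proper_ideal J -> I \subset J -> J = I.

Definition pideal (a : R) : {set R} := [set a * x | x in R].

Definition local_ring : Prop :=
  exists M, forall J, maximal_ideal J <-> J = M.

Definition principal_ring : Prop :=
  forall I, is_ideal I -> exists a, I = pideal a.

(* finite valuation ring: finite (finType), commutative with identity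
   (finComNzRingType), local and principal *)
Definition finite_valuation_ring : Prop := local_ring /\ principal_ring.

Definition uniformizer (z : R) : Prop := maximal_ideal (pideal z).

Definition nil_index (z : R) (r : nat) : Prop :=
  (0 < r)%N /\ z ^+ r = 0 /\ forall k, (0 < k < r)%N -> z ^+ k != 0.

(* size of the residue field R/(z) = number of cosets of (z) *)
Definition residue_size (z : R) : nat := (#|R| %/ #|pideal z|)%N.

Definition sumset (A : {set R}) : {set R} := [set a + b | a in A, b in A].
Definition sqset (A : {set R}) : {set R} := [set x ^+ 2 | x in A].
End FVR.

From Pilot Require Import Defs.
From mathcomp Require Import all_boot all_order all_algebra.
From mathcomp Require Import zify ring.
Set Implicit Arguments. Unset Strict Implicit. Unset Printing Implicit Defensive.
Import Order.TTheory GRing.Theory Num.Theory.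

(* - Algebra of R: non-units form the maximal ideal (z); counting through the
     multiplication-by-z maps gives |R| = q^r and |(z)| = q^(r-1); as q is odd, 2 is a
     unit and a unit square has exactly the square roots +-x, so |A| <= 4 |A^2|.
   - Point-line incidences over R: if every line of a family L carries at least a
     points of P, then a |R| <= 2 |P| or a^2 |L| <= 4 |R| |(z)| |P|.  This is a
     second-moment (variance) bound: two points whose abscissae differ by a unit share
     at most one line.
   - Configuration: the points (u, v - u^2), u in A + A, v in A^2 + A^2, and the lines
     y = -2c x + (e + c^2), c in A, e in A^2; each such line contains the |A| points
     (x + c, x^2 + e - (x + c)^2), x in A.
   - Real arithmetic: either alternative of the incidence bound, with the hypothesis
     |A + A| |A|^2 >= c q^(3r-1), yields max(|A + A|, |A^2 + A^2|)^3 >= K q^r |A|^2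
     for K = min(1/2, c/16); taking cube roots gives the theorem with C = K^(1/3). *)

Lemma card_fibres_le (T T' : finType) (f : T -> T') (G : {set T}) k :
  (forall x, x \in G -> #|[set y in G | f y == f x]| <= k) ->
  #|G| <= #|f @: G| * k.
Proof.
move=> Hk; rewrite -sum1_card (partition_big_imset f) /= -sum_nat_const.
apply: leq_sum => _ /imsetP[x xG ->]; rewrite sum1dep_card.
by apply: leq_trans (Hk x xG); apply: subset_leq_card; apply/subsetP => y; rewrite !inE.
Qed.

Lemma card_fibres (T T' : finType) (f : T -> T') (G : {set T}) k :
  (forall x, x \in G -> #|[set y in G | f y == f x]| = k) -> #|G| = #|f @: G| * k.
Proof.
move=> Hk; rewrite -sum1_card (partition_big_imset f) /= -sum_nat_const.
apply: eq_bigr => _ /imsetP[x xG ->]; rewrite -(Hk x xG) sum1dep_card.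
by apply: eq_card => y; rewrite !inE.
Qed.

Lemma fixfree_involution_even (T : finType) (g : T -> T) :
  involutive g -> (forall x, g x != x) -> ~~ odd #|T|.
Proof.
move=> gK gx.
pose B := [set x | enum_rank x < enum_rank (g x)].
have CB : ~: B = g @: B.
  apply/setP => x; rewrite !inE; apply/idP/imsetP => [|[y]].
  - rewrite -leqNgt => le_gx; exists (g x); last by rewrite gK.
    rewrite inE gK ltn_neqAle le_gx andbT.
    by apply: contra_neq (gx x) => /val_inj e; rewrite -[g x]enum_rankK e enum_rankK.
  - by rewrite inE => lt_y ->; rewrite gK -leqNgt ltnW.
have := cardsC B; rewrite CB card_imset; last exact: inv_inj.
by move=> <-; rewrite addnn odd_double.
Qed.

Section FiniteRing.
Local Open Scope ring_scope.
Variable Rg : finComNzRingType.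

Definition invertible (x : Rg) : bool := [exists y, x * y == 1].

Lemma invertibleP (x : Rg) : reflect (exists y, x * y = 1) (invertible x).
Proof. by apply: (iffP existsP) => [[y /eqP]|[y e]]; exists y => //; apply/eqP. Qed.

Lemma invertibleM (x y : Rg) : invertible x -> invertible y -> invertible (x * y).
Proof.
move=> /invertibleP[u xu] /invertibleP[v yv]; apply/invertibleP; exists (u * v).
by rewrite mulrACA xu yv mulr1.
Qed.

Lemma invertible_cancel (u x : Rg) : invertible u -> x * u = 0 -> x = 0.
Proof. by move=> /invertibleP[v uv] xu0; rewrite -(mulr1 x) -uv mulrA xu0 mul0r. Qed.

Lemma pidealP (a x : Rg) : reflect (exists y, x = a * y) (x \in pideal a).
Proof. by apply: (iffP imsetP) => [[y _ ->]|[y ->]]; exists y. Qed.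

Lemma pideal_ideal (a : Rg) : is_ideal (pideal a).
Proof.
split.
- by apply/pidealP; exists 0; rewrite mulr0.
- move=> _ _ /pidealP[u ->] /pidealP[v ->].
  by apply/pidealP; exists (u + v); rewrite mulrDr.
- by move=> b _ /pidealP[u ->]; apply/pidealP; exists (b * u); rewrite mulrCA.
Qed.

(* The ideal property as a boolean, so that ideals can be maximised over. *)
Definition idealb (J : {set Rg}) : bool :=
  [&& 0 \in J, [forall x, forall y, (x \in J) ==> (y \in J) ==> (x + y \in J)] &
      [forall a, forall x, (x \in J) ==> (a * x \in J)]].

Lemma idealP (J : {set Rg}) : reflect (is_ideal J) (idealb J).
Proof.
apply: (iffP and3P) => [[J0 /forallP JD /forallP JM]|[J0 JD JM]]; split => //.
- by move=> x y xJ yJ; have /forallP/(_ y) := JD x; rewrite xJ yJ.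
- by move=> a x xJ; have /forallP/(_ x) := JM a; rewrite xJ.
- by apply/forallP=> x; apply/forallP=> y; do 2 apply/implyP=> ?; exact: JD.
- by apply/forallP=> a; apply/forallP=> x; apply/implyP=> ?; exact: JM.
Qed.

(* Krull's lemma for finite rings: a largest proper ideal above I is maximal. *)
Lemma maximal_ideal_above (I : {set Rg}) :
  Defs.proper_ideal I -> exists J, maximal_ideal J /\ I \subset J.
Proof.
move=> [idI I1].
pose P J := [&& idealb J, 1 \notin J & I \subset J].
have PI : P I by rewrite /P I1 subxx !andbT; apply/idealP.
have [J /and3P[/idealP idJ J1 sIJ] Jmax] := arg_maxnP (fun J : {set Rg} => #|J|) PI.
exists J; split => //; split; first by split.
move=> K [idK K1] sJK; apply/eqP; rewrite eq_sym eqEcard sJK /=; apply: Jmax.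
by rewrite /P K1 (subset_trans sIJ sJK) !andbT; apply/idealP.
Qed.

End FiniteRing.

Section ValuationRing.
Local Open Scope ring_scope.
Variables (Rg : finComNzRingType) (z : Rg) (r : nat).
Hypothesis Rg_local : local_ring Rg.
Hypothesis z_unif : uniformizer z.
Hypothesis z_nil : nil_index z r.

Local Notation M := (pideal z).

Lemma nonunit_in_max (x : Rg) : ~~ invertible x -> x \in M.
Proof.
move=> xN.
have px : Defs.proper_ideal (pideal x).
  split; first exact: pideal_ideal.
  by apply/negP => /pidealP[y /esym xy1]; case/negP: xN; apply/invertibleP; exists y.
have [J [maxJ sxJ]] := maximal_ideal_above px.
have [M0 uniqM] := Rg_local.
have -> : M = M0 by apply/uniqM.
have <- : J = M0 by apply/uniqM.
by apply: (subsetP sxJ); apply/pidealP; exists 1; rewrite mulr1.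
Qed.

Lemma unit_notin_max (x : Rg) : invertible x -> x \notin M.
Proof.
move=> /invertibleP[y xy]; apply/negP => /pidealP[w xw].
have [[_ M1] _] := z_unif; case/negP: M1.
by apply/pidealP; exists (w * y); rewrite mulrA -xw.
Qed.

Lemma max_addr (x y : Rg) : x \in M -> y \in M -> x + y \in M.
Proof. by have [_ MD _] := pideal_ideal z; apply: MD. Qed.

Lemma nil_index_gt0 : (0 < r)%N. Proof. by case: z_nil. Qed.

Lemma zpowr_eq0 : z ^+ r = 0. Proof. by case: z_nil => _ []. Qed.

Lemma zpowr_neq0 k : (k < r)%N -> z ^+ k != 0.
Proof.
have [_ [_ zk]] := z_nil; case: k => [|k] kr; first by rewrite expr0 oner_neq0.
by apply: zk; rewrite kr.
Qed.

Lemma zadic_split k (x : Rg) :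
  x \in pideal (z ^+ k) \/ exists j u, [/\ (j < k)%N, invertible u & x = z ^+ j * u].
Proof.
elim: k => [|k [/pidealP[y ->]|[j [u [jk uu ->]]]]].
- by left; apply/pidealP; exists x; rewrite expr0 mul1r.
- have [uy|/nonunit_in_max/pidealP[w ->]] := boolP (invertible y).
    by right; exists k, y.
  by left; apply/pidealP; exists w; rewrite exprSr mulrA.
- by right; exists j, u; split => //; apply: ltnW.
Qed.

Lemma annihilator_zpow i (x : Rg) :
  (i <= r)%N -> z ^+ i * x = 0 -> x \in pideal (z ^+ (r - i)).
Proof.
move=> ir zix0; have [//|[j [u [jri uu xE]]]] := zadic_split (r - i) x.
move: zix0; rewrite xE mulrA -exprD => /(invertible_cancel uu) zij0.
have ijr : (i + j < r)%N by lia.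
by move: (zpowr_neq0 ijr); rewrite zij0 eqxx.
Qed.

Definition card_zpow i : nat := #|pideal (z ^+ i)|.

(* Multiplication by z maps (z^i) onto (z^(i+1)) with fibres the cosets of (z^(r-1)). *)
Lemma card_zpow_step i : (i < r)%N -> card_zpow i = (card_zpow i.+1 * card_zpow r.-1)%N.
Proof.
move=> ir; have r1 : r.-1 = (r - 1)%N by lia.
rewrite /card_zpow (@card_fibres _ _ (fun x => z * x) _ #|pideal (z ^+ r.-1)|).
  congr (_ * _)%N; apply: eq_card => y; apply/imsetP/pidealP.
    by case=> _ /pidealP[w ->] ->; exists w; rewrite exprS mulrA.
  by case=> w ->; exists (z ^+ i * w); [apply/pidealP; exists w | rewrite exprS mulrA].
move=> _ /pidealP[a ->].
rewrite -(card_imset (pideal (z ^+ r.-1)) (addrI (z ^+ i * a))).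
apply: eq_card => y; rewrite inE; apply/andP/imsetP.
  case=> /pidealP[b ->] /eqP zb_za.
  exists (z ^+ i * b - z ^+ i * a); last by rewrite addrC subrK.
  rewrite r1; apply: annihilator_zpow; first by lia.
  by rewrite expr1 mulrBr zb_za subrr.
case=> _ /pidealP[c ->] ->; split.
  apply/pidealP; exists (a + z ^+ (r.-1 - i) * c).
  by rewrite mulrDr mulrA -exprD; congr (_ + _ ^+ _ * _); lia.
rewrite mulrDr [z * (z ^+ r.-1 * c)]mulrA -exprS prednK ?nil_index_gt0 //.
by rewrite zpowr_eq0 mul0r addr0.
Qed.

Lemma card_zpow_pow j : (j <= r)%N -> card_zpow (r - j) = (card_zpow r.-1 ^ j)%N.
Proof.
elim: j => [|j IH] jr.
  rewrite subn0 expn0 /card_zpow zpowr_eq0 -(cards1 (0 : Rg)); apply: eq_card => x.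
  rewrite inE; apply/pidealP/eqP => [[y ->]|->]; first by rewrite mul0r.
  by exists 0; rewrite mul0r.
rewrite expnS mulnC -IH; last by lia.
have -> : (r - j = (r - j.+1).+1)%N by lia.
by apply: card_zpow_step; lia.
Qed.

Lemma card_ring_max :
  #|Rg| = (residue_size z ^ r)%N /\ #|M| = (residue_size z ^ (r - 1))%N.
Proof.
have r0 := nil_index_gt0.
have cR : #|Rg| = (card_zpow r.-1 ^ r)%N.
  rewrite -cardsT -card_zpow_pow // subnn /card_zpow expr0; apply: eq_card => x.
  by rewrite inE; apply/esym/pidealP; exists x; rewrite mul1r.
have cM : #|M| = (card_zpow r.-1 ^ (r - 1))%N.
  by rewrite -card_zpow_pow ?leq_subr // /card_zpow (_ : r - (r - 1) = 1)%N ?expr1 //; lia.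
suff -> : residue_size z = card_zpow r.-1 by [].
have q0 : (0 < card_zpow r.-1)%N.
  by apply/card_gt0P; exists 0; apply/pidealP; exists 0; rewrite mulr0.
have qpow : (card_zpow r.-1 ^ r = card_zpow r.-1 * card_zpow r.-1 ^ (r - 1))%N.
  by rewrite -expnS; congr (_ ^ _)%N; lia.
by rewrite /residue_size cR cM qpow mulnK // expn_gt0 q0.
Qed.

(* With q odd, 2 is a unit: otherwise x |-> x + z^(r-1) would make |R| even. *)
Lemma two_invertible : odd (residue_size z) -> invertible (2%:R : Rg).
Proof.
move=> q_odd; have [//|/nonunit_in_max/pidealP[w two_zw]] := boolP (invertible (2%:R : Rg)).
have r0 := nil_index_gt0; pose t := z ^+ (r - 1).
have tt0 : t + t = 0.
  rewrite -mulr2n -mulr_natl two_zw /t mulrAC -exprS (_ : (r - 1).+1 = r)%N.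
    by rewrite zpowr_eq0 mul0r.
  by lia.
suff : ~~ odd #|Rg| by have [-> _] := card_ring_max; rewrite oddX q_odd orbT.
apply: (@fixfree_involution_even Rg (fun x => x + t)) => x.
- by rewrite -addrA tt0 addr0.
- by rewrite -subr_eq0 addrC addKr; apply: zpowr_neq0; lia.
Qed.

Lemma sqrt_unit_square (x y : Rg) :
  odd (residue_size z) -> invertible x -> x ^+ 2 = y ^+ 2 -> y = x \/ y = - x.
Proof.
move=> q_odd ux x2y2.
have prod0 : (x - y) * (x + y) = 0 by rewrite -subr_sqr x2y2 subrr.
have [u1|n1] := boolP (invertible (x - y)).
  right; move: prod0; rewrite mulrC => /(invertible_cancel u1)/eqP.
  by rewrite addrC addr_eq0 => /eqP.
have [u2|n2] := boolP (invertible (x + y)).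
  by left; move: prod0 => /(invertible_cancel u2)/subr0_eq.
have := max_addr (nonunit_in_max n1) (nonunit_in_max n2).
rewrite addrACA addNr addr0 -mulr2n -mulr_natl.
have u2x : invertible (2%:R * x) by apply: invertibleM => //; exact: two_invertible.
by move/negP: (unit_notin_max u2x).
Qed.

End ValuationRing.

Section PointLineIncidence.
Local Open Scope ring_scope.
Variables (Rg : finComNzRingType) (M : {set Rg}).
Hypothesis nonunit_M : forall x : Rg, ~~ invertible x -> x \in M.
Variable P : {set Rg * Rg}.

Local Notation N := #|Rg|.

Definition incident (p l : Rg * Rg) : bool := p.2 == l.1 * p.1 + l.2.

Definition npoints (l : Rg * Rg) : nat := (\sum_(p in P) incident p l)%N.

Definition common_lines (p p' : Rg * Rg) : nat :=
  (\sum_l (incident p l && incident p' l))%N.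

(* Through every point passes exactly one line of each slope. *)
Lemma lines_through (p : Rg * Rg) : (\sum_l incident p l)%N = N.
Proof.
rewrite -big_mkcondr /= sum1dep_card -cardsT.
rewrite -(card_imset [set: Rg] (f := fun s => (s, p.2 - s * p.1))); last by move=> s t [].
apply: eq_card => l; rewrite !inE; apply/idP/imsetP => [/eqP pl|[s _ ->]].
  by exists l.1 => //; rewrite pl addrC addKr; case: l pl.
by rewrite /incident /= addrC subrK.
Qed.

(* First moment: every point of P lies on N lines. *)
Lemma sum_npoints : (\sum_l npoints l)%N = (N * #|P|)%N.
Proof.
rewrite /npoints exchange_big /= mulnC -sum_nat_const.
by apply: eq_bigr => p _; apply: lines_through.
Qed.

Lemma sum_npoints_sq :
  (\sum_l npoints l ^ 2)%N = (\sum_(p in P) \sum_(p' in P) common_lines p p')%N.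
Proof.
under eq_bigr => l _ do rewrite /npoints expnS expn1 big_distrl /=.
rewrite exchange_big /=; apply: eq_bigr => p _.
under eq_bigr => l _ do rewrite big_distrr /=.
rewrite exchange_big /=; apply: eq_bigr => p' _; apply: eq_bigr => l _.
by case: (incident p l); case: (incident p' l).
Qed.

Lemma common_lines_unit (p p' : Rg * Rg) :
  invertible (p'.1 - p.1) -> (common_lines p p' <= 1)%N.
Proof.
move=> /invertibleP[v dv]; rewrite /common_lines -big_mkcondr /= sum1dep_card.
apply/card_le1_eqP => l1 l2; rewrite !inE /incident.
have line_eq l : p.2 = l.1 * p.1 + l.2 -> p'.2 = l.1 * p'.1 + l.2 ->
    l = ((p'.2 - p.2) * v, p.2 - (p'.2 - p.2) * v * p.1).
  move=> pl p'l; have sl : l.1 = (p'.2 - p.2) * v.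
    rewrite pl p'l (_ : _ - _ = l.1 * (p'.1 - p.1)); first by rewrite -mulrA dv mulr1.
    by ring.
  have tl : l.2 = p.2 - l.1 * p.1 by rewrite pl addrC addKr.
  by case: l sl tl {pl p'l} => s t /= -> ->.
move=> /andP[/eqP pl1 /eqP p'l1] /andP[/eqP pl2 /eqP p'l2].
by rewrite (line_eq l1 pl1 p'l1) (line_eq l2 pl2 p'l2).
Qed.

(* Points of P on a line through p whose abscissae differ from p.1 by a non-unit
   are determined by their abscissa, which lies in p.1 + M. *)
Lemma sum_common_lines_nonunit (p : Rg * Rg) :
  (\sum_(p' in P | ~~ invertible (p'.1 - p.1)%R) common_lines p p' <= N * #|M|)%N.
Proof.
rewrite /common_lines exchange_big /= -(lines_through p) big_distrl /=.
apply: leq_sum => l _; case: (boolP (incident p l)) => /= pl; last first.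
  by rewrite big1 // => p' _; rewrite andFb.
pose Pl := [set p' in P | ~~ invertible (p'.1 - p.1)%R & incident p' l].
rewrite mul1n; apply: (@leq_trans #|Pl|).
  rewrite -sum1dep_card big_mkcond [X in (_ <= X)%N]big_mkcond /=; apply: leq_sum => p' _.
  by case: (p' \in P); case: (invertible _); case: (incident p' l).
rewrite -(card_imset M (addrI p.1)) -(card_in_imset (f := fst) (D := Pl)); last first.
  move=> [x1 y1] [x2 y2]; rewrite !inE /incident /=.
  by move=> /and3P[_ _ /eqP ->] /and3P[_ _ /eqP ->] ->.
apply: subset_leq_card; apply/subsetP => _ /imsetP[p' + ->].
rewrite inE => /and3P[_ nu _]; apply/imsetP; exists (p'.1 - p.1); first exact: nonunit_M.
by rewrite addrC subrK.
Qed.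

Lemma sum_common_lines (p : Rg * Rg) :
  (\sum_(p' in P) common_lines p p' <= #|P| + N * #|M|)%N.
Proof.
rewrite (bigID (fun p' : Rg * Rg => invertible (p'.1 - p.1))) /=.
apply: leq_add; last exact: sum_common_lines_nonunit.
apply: (@leq_trans (\sum_(p' in P | invertible (p'.1 - p.1)%R) 1)%N).
  by apply: leq_sum => p' /andP[_ u]; apply: common_lines_unit.
rewrite sum1dep_card; apply: subset_leq_card; apply/subsetP => x.
by rewrite inE => /andP[].
Qed.

Lemma sum_npoints_sq_le : (\sum_l npoints l ^ 2 <= #|P| * #|P| + #|P| * (N * #|M|))%N.
Proof.
rewrite sum_npoints_sq -mulnDr -sum_nat_const.
by apply: leq_sum => p _; exact: sum_common_lines.
Qed.

Lemma npoints_variance :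
  \sum_l ((N * npoints l)%:R - #|P|%:R) ^+ 2 <= (N * N * (#|P| * (N * #|M|)))%:R :> int.
Proof.
have cardL : #|{: Rg * Rg}| = (N * N)%N by rewrite card_prod.
have -> : \sum_l ((N * npoints l)%:R - #|P|%:R) ^+ 2 =
    (N * N)%:R * ((\sum_l npoints l ^ 2)%N%:R - (#|P| * #|P|)%:R) :> int.
  rewrite (eq_bigr (fun l => (N * N)%:R * (npoints l ^ 2)%N%:R
      - (2 * N * #|P|)%:R * (npoints l)%:R + (#|P| * #|P|)%:R)); last by move=> l _; ring.
  rewrite !big_split /= sumrN sumr_const -!mulr_sumr -!natr_sum sum_npoints cardL.
  by rewrite -mulr_natr !natrM; ring.
rewrite [X in _ <= X]natrM; apply: ler_wpM2l => //.
rewrite lerBlDr -natrD ler_nat addnC.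
exact: sum_npoints_sq_le.
Qed.

Lemma incidence_bound (L : {set Rg * Rg}) (a : nat) :
  (forall l, l \in L -> a <= npoints l)%N ->
  (a * N <= 2 * #|P| \/ a ^ 2 * #|L| <= 4 * (N * #|M| * #|P|))%N.
Proof.
move=> L_rich; have [|big] := leqP (a * N) (2 * #|P|); [by left | right].
pose dev l : int := ((N * npoints l)%:R - #|P|%:R) ^+ 2.
have deviation l : l \in L -> ((a * N) ^ 2)%:R <= 4%:R * dev l.
  move=> /L_rich al.
  have aN_le : (a * N)%:R <= (N * npoints l)%:R :> int.
    by rewrite ler_nat mulnC leq_mul2l al orbT.
  have aN_gt : (2 * #|P|)%:R < (a * N)%:R :> int by rewrite ltr_nat.
  move: aN_le aN_gt; rewrite /dev natrX.
  set x := (a * N)%:R; set y := (N * npoints l)%:R; set w := #|P|%:R => le_xy lt_wx.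
  have x_le : x <= 2%:R * (y - w) by lia.
  by nia.
have sum_dev : ((a * N) ^ 2 * #|L|)%:R <= 4%:R * \sum_l dev l :> int.
  apply: le_trans (_ : \sum_(l in L) 4%:R * dev l <= _).
    by rewrite natrM mulr_natr -sumr_const; apply: ler_sum => l; exact: deviation.
  rewrite mulr_sumr [X in _ <= X](bigID (mem L)) /= lerDl.
  by apply: sumr_ge0 => l _; rewrite mulr_ge0 // sqr_ge0.
have := le_trans sum_dev (ler_wpM2l _ npoints_variance).
rewrite -natrM ler_nat => /(_ isT) bound.
have N0 : (0 < N)%N by apply/card_gt0P; exists 0.
rewrite -(@leq_pmul2l (N * N)) ?muln_gt0 ?N0 //.
have -> : (N * N * (a ^ 2 * #|L|) = (a * N) ^ 2 * #|L|)%N by ring.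
have -> : (N * N * (4 * (N * #|M| * #|P|)) = 4 * (N * N * (#|P| * (N * #|M|))))%N by ring.
exact: bound.
Qed.

End PointLineIncidence.

(* A translate of A sits inside A + A. *)
Lemma card_sumset_ge (Rg : finComNzRingType) (A : {set Rg}) : #|A| <= #|sumset A|.
Proof.
have [-> | [x xA]] := set_0Vmem A; first by rewrite cards0.
rewrite -(card_imset A (addrI x)); apply: subset_leq_card.
by apply/subsetP => _ /imsetP[y yA ->]; exact: imset2_f.
Qed.

Section SumProductConfiguration.
Local Open Scope ring_scope.
Variables (Rg : finComNzRingType) (z : Rg) (r : nat).
Hypothesis Rg_local : local_ring Rg.
Hypothesis z_unif : uniformizer z.
Hypothesis z_nil : nil_index z r.
Hypothesis q_odd : odd (residue_size z).
Variable A : {set Rg}.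
Hypothesis A_large : (2 * #|pideal z| <= #|A|)%N.

(* At least half of A consists of units, and squaring is at most 2-to-1 on units. *)
Lemma card_sqset_ge : (#|A| <= 4 * #|sqset A|)%N.
Proof.
pose Au := [set x in A | invertible x].
have A_Au : (#|A| <= #|Au| + #|pideal z|)%N.
  rewrite -(cardsID (pideal z) A) addnC leq_add //; apply: subset_leq_card.
    apply/subsetP => x; rewrite !inE => /andP[xM xA]; rewrite xA /=.
    by apply: contraR xM => /(nonunit_in_max Rg_local z_unif).
  by apply/subsetP => x; rewrite inE => /andP[].
have Au_sq : (#|Au| <= #|[set x ^+ 2 | x in Au]| * 2)%N.
  apply: card_fibres_le => x; rewrite inE => /andP[xA ux].
  apply: (@leq_trans #|[set x; - x]|); last by rewrite cards2; case: (_ != _).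
  apply: subset_leq_card; apply/subsetP => y; rewrite !inE => /andP[_ /eqP x2y2].
  by case: (sqrt_unit_square Rg_local z_unif z_nil q_odd ux (esym x2y2)) => ->;
    rewrite eqxx ?orbT.
have sq_sub : (#|[set x ^+ 2 | x in Au]| <= #|sqset A|)%N.
  apply: subset_leq_card; apply/subsetP => _ /imsetP[x + ->]; rewrite inE => /andP[xA _].
  exact: imset_f.
lia.
Qed.

Definition config_points : {set Rg * Rg} :=
  [set (p.1, p.2 - p.1 ^+ 2) | p in setX (sumset A) (sumset (sqset A))].

Definition config_lines : {set Rg * Rg} :=
  [set (- (2%:R * p.1), p.2 + p.1 ^+ 2) | p in setX A (sqset A)].

(* Both parametrisations are injective; for the lines this uses that 2 is a unit. *)
Lemma card_config_points :
  #|config_points| = (#|sumset A| * #|sumset (sqset A)|)%N.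
Proof.
rewrite card_imset ?cardsX // => -[x1 y1] [x2 y2] /= [-> e2].
by move/addIr: e2 => ->.
Qed.

Lemma card_config_lines : #|config_lines| = (#|A| * #|sqset A|)%N.
Proof.
rewrite card_imset ?cardsX // => -[c1 e1] [c2 e2] /= [/oppr_inj e12 ee].
have /invertibleP[v two_v] := two_invertible Rg_local z_unif z_nil q_odd.
have ec : c1 = c2 by rewrite -[c1]mul1r -[c2]mul1r -two_v mulrAC e12 mulrAC.
by rewrite ec in ee *; move/addIr: ee => ->.
Qed.

(* The line through (c, e) contains the |A| points (x + c, x^2 + e - (x + c)^2), x in A. *)
Lemma npoints_config_lines l :
  l \in config_lines -> (#|A| <= npoints config_points l)%N.
Proof.
case/imsetP => -[c e]; rewrite inE => /andP[/= cA eS] ->.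
rewrite /npoints -big_mkcondr /= sum1dep_card.
rewrite -(card_imset A (f := fun x => (x + c, x ^+ 2 + e - (x + c) ^+ 2))); last first.
  by move=> x y [] /addIr.
apply: subset_leq_card; apply/subsetP => _ /imsetP[x xA ->]; rewrite inE.
apply/andP; split; last by rewrite /incident /=; apply/eqP; ring.
apply/imsetP; exists (x + c, x ^+ 2 + e) => //; rewrite inE /=.
by rewrite (imset2_f _ xA cA) /=; apply: imset2_f => //; apply: imset_f.
Qed.

Lemma sum_product_dichotomy :
  (#|A| * #|Rg| <= 2 * (#|sumset A| * #|sumset (sqset A)|))%N \/
  (#|A| ^ 4 <= 16 * (#|Rg| * #|pideal z| * (#|sumset A| * #|sumset (sqset A)|)))%N.
Proof.
have nonunit_M := nonunit_in_max Rg_local z_unif.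
have [] := incidence_bound nonunit_M npoints_config_lines;
  rewrite card_config_points ?card_config_lines; first by left.
move=> bound; right; have := card_sqset_ge.
move: bound; set a := #|A|; set s := #|sqset A| => bound a_s.
apply: (@leq_trans (a ^ 3 * (4 * s))); first by rewrite expnSr leq_mul2l a_s orbT.
have -> : (a ^ 3 * (4 * s) = 4 * (a ^ 2 * (a * s)))%N by ring.
by rewrite (_ : 16 = 4 * 4)%N // -mulnA leq_mul2l.
Qed.

End SumProductConfiguration.

From Stdlib Require Import Reals Lra Psatz.

Lemma natpow_expn (p k : nat) : Nat.pow p k = expn p k.
Proof. by elim: k => // k IH; rewrite expnS -IH. Qed.

Section RealArithmetic.
Local Open Scope R_scope.

Lemma INR_muln (a b : nat) : INR (muln a b) = INR a * INR b.
Proof. exact: mult_INR. Qed.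

Lemma INR_expn (a b : nat) : INR (expn a b) = INR a ^ b.
Proof. by rewrite -natpow_expn pow_INR. Qed.

Lemma leq_INR (a b : nat) : leq a b -> INR a <= INR b.
Proof. by move/ssrnat.leP; apply: le_INR. Qed.

Lemma INR_leq (a b : nat) : INR a <= INR b -> leq a b.
Proof. by move/INR_le/ssrnat.leP. Qed.

(* The real-number core of the theorem: with X = max(S, T), either alternative of the
   incidence dichotomy, combined with the energy hypothesis c Q^3 <= q S a^2, forces
   X^3 >= K Q a^2 with K = min(1/2, c/16). *)
Lemma cube_growth (c q Q a S T : R) :
  0 < c -> 0 < q -> 0 < Q -> 0 < a -> a <= S -> 0 <= T ->
  a * Q <= 2 * (S * T) \/ q * a ^ 4 <= 16 * Q ^ 2 * (S * T) ->
  c * Q ^ 3 <= q * (S * a ^ 2) ->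
  Rmin (1/2) (c/16) * Q * a ^ 2 <= Rmax S T ^ 3.
Proof.
move=> c0 q0 Q0 a0 aS T0 dichotomy energy.
have SX := Rmax_l S T; have TX := Rmax_r S T; set X := Rmax S T in SX TX *.
have Qa2 : 0 <= Q * a ^ 2 by nra.
have STX : S * T <= X ^ 2 by nra.
case: dichotomy => [few | many].
- apply: (Rle_trans _ (1/2 * Q * a ^ 2)).
    by have := Rmin_l (1/2) (c/16); nra.
  by nra.
- apply: (Rle_trans _ (c/16 * Q * a ^ 2)).
    by have := Rmin_r (1/2) (c/16); nra.
  (* Multiply the two hypotheses and cancel the positive factor D = Q^2 q a^2. *)
  pose D := Q ^ 2 * q * a ^ 2.
  have D0 : 0 < D.
    by apply: Rmult_lt_0_compat; [apply: Rmult_lt_0_compat => // |]; apply: pow_lt.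
  have prod : D * (c * Q * a ^ 2) <= D * (16 * (S * (S * T))).
    have -> : D * (c * Q * a ^ 2) = (c * Q ^ 3) * (q * a ^ 4) by rewrite /D; ring.
    have -> : D * (16 * (S * (S * T))) = (q * (S * a ^ 2)) * (16 * Q ^ 2 * (S * T)).
      by rewrite /D; ring.
    by apply: Rmult_le_compat => //; apply: Rmult_le_pos; try apply: pow_le; lra.
  have {}prod := Rmult_le_reg_l _ _ _ D0 prod.
  have S2T_X3 : S * (S * T) <= X ^ 3.
    by rewrite /= Rmult_1_r; apply: Rmult_le_compat; nra.
  by lra.
Qed.

Lemma cube_root_bound (K Q a X : R) :
  0 < K -> 0 < Q -> 0 < a -> K * Q * a ^ 2 <= X ^ 3 ->
  Rpower K (1/3) * Rpower Q (1/3) * Rpower a (2/3) <= X.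
Proof.
move=> K0 Q0 a0 KQa_X.
have KQa0 : 0 < K * Q * a ^ 2 by apply: Rmult_lt_0_compat; [nra | apply: pow_lt].
have X0 : 0 < X.
  have [//|X_le0] := Rlt_le_dec 0 X; have : X ^ 3 <= 0 by nra.
  by lra.
have -> : Rpower a (2/3) = Rpower (a ^ 2) (1/3).
  by rewrite -(@Rpower_pow 2 a a0) Rpower_mult /=; congr Rpower; lra.
rewrite !Rpower_mult_distr //; [| exact: Rmult_lt_0_compat | exact: pow_lt].
have -> : X = Rpower (X ^ 3) (1/3).
  by rewrite -(@Rpower_pow 3 X X0) Rpower_mult (_ : INR 3 * (1/3) = 1) ?Rpower_1 //=; lra.
by apply: Rle_Rpower_l; [lra | split].
Qed.

End RealArithmetic.

Lemma sum_product_dichotomy_R (Rg : finComNzRingType) (z : Rg) (r : nat) (A : {set Rg}) :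
  local_ring Rg -> uniformizer z -> nil_index z r -> odd (residue_size z) ->
  leq (2 * #|pideal z|) #|A| ->
  let q := INR (residue_size z) in
  let a := INR #|A| in let S := INR #|sumset A| in let T := INR #|sumset (sqset A)| in
  (a * q ^ r <= 2 * (S * T) \/ q * a ^ 4 <= 16 * (q ^ r) ^ 2 * (S * T))%R.
Proof.
move=> Rg_local z_unif z_nil q_odd A_large q a S T.
have [card_Rg card_M] := card_ring_max Rg_local z_unif z_nil.
have qm_Q : (q * q ^ (r - 1) = q ^ r)%R.
  by rewrite tech_pow_Rmult; congr pow; have := nil_index_gt0 z_nil; lia.
have [few | many] := sum_product_dichotomy Rg_local z_unif z_nil q_odd A_large; [left | right].
  by move/leq_INR: few; rewrite !INR_muln card_Rg INR_expn.
move/leq_INR: many; rewrite card_Rg card_M INR_expn !INR_muln !INR_expn => many.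
have -> : (16 * (q ^ r) ^ 2 * (S * T) = q * (INR 16 * (q ^ r * q ^ (r - 1) * (S * T))))%R.
  by rewrite -qm_Q /=; ring.
by apply: Rmult_le_compat_l => //; apply: pos_INR.
Qed.

(* Theorem 1.5, with C = min(1/2, c/16)^(1/3). *)
Theorem theorem1p5 :
  forall c : R, (0 < c)%R ->
  exists C : R, (0 < C)%R /\
  forall (Rg : finComNzRingType) (z : Rg) (q r : nat),
    finite_valuation_ring Rg ->
    uniformizer z -> nil_index z r -> q = residue_size z ->
    (exists p k : nat, prime p /\ odd p /\ (0 < k)%N /\ q = (p ^ k)%N) ->
    forall A : {set Rg},
      (INR #|A| >= 2 * INR q ^ (r - 1))%R ->
      (INR #|sumset A| * INR #|A| ^ 2 >= c * INR q ^ (3 * r - 1))%R ->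
      (Rmax (INR #|sumset A|) (INR #|sumset (sqset A)|)
         >= C * Rpower (INR q) (INR r / 3) * Rpower (INR #|A|) (2 / 3))%R.
Proof.
move=> c c0; pose K := Rmin (1/2) (c/16).
have K0 : (0 < K)%R by apply: Rmin_glb_lt; lra.
exists (Rpower K (1/3)); split; first exact: exp_pos.
move=> Rg z q r [Rg_local _] z_unif z_nil q_def [p [k [_ [p_odd [_ q_pk]]]]] A A_large energy.
have q_odd : odd (residue_size z) by rewrite -q_def q_pk natpow_expn oddX p_odd orbT.
have r0 := nil_index_gt0 z_nil.
have q0 : (0 < INR q)%R by apply: lt_0_INR; apply/ssrnat.ltP; rewrite q_def odd_gt0.
have [_ card_M] := card_ring_max Rg_local z_unif z_nil; rewrite -q_def in card_M.
have A_M : leq (2 * #|pideal z|) #|A|.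
  apply: INR_leq; rewrite INR_muln card_M INR_expn (_ : INR 2 = 2%R) /=; last by lra.
  exact: Rge_le A_large.
have Q0 : (0 < INR q ^ r)%R by apply: pow_lt.
have a0 : (0 < INR #|A|)%R by have := pow_lt _ (r - 1) q0; lra.
have Q_cube : (INR q * INR q ^ (3 * r - 1) = (INR q ^ r) ^ 3)%R.
  by rewrite tech_pow_Rmult -pow_mult; congr pow; lia.
have -> : Rpower (INR q) (INR r / 3) = Rpower (INR q ^ r) (1/3).
  by rewrite -(@Rpower_pow r) // Rpower_mult; congr Rpower; lra.
apply/Rle_ge/cube_root_bound => //; apply: (@cube_growth c (INR q)) => //.
- by apply: leq_INR; exact: card_sumset_ge.
- exact: pos_INR.
- by have := sum_product_dichotomy_R Rg_local z_unif z_nil q_odd A_M; rewrite -q_def.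
- have -> : (c * (INR q ^ r) ^ 3 = INR q * (c * INR q ^ (3 * r - 1)))%R.
    by rewrite -Q_cube; ring.
  by apply: Rmult_le_compat_l; [lra | exact: Rge_le energy].
Qed.
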